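(* Let $M$ be a commutative and cocommutative Hopf algebra over $\mathbb{C}$, let $A$ be a commutative $\mathbb{C}$-algebra, and let $r_1,r_2$ be $A$-valued bicharacters on $M$. If $r=r_1\circ r_2$, then \[ \mathrm{EQ}_{r}=\mathrm{EQ}_{r_1}\circ\mathrm{EQ}_{r_2}. \]
   Context: For a Hopf algebra $M$ with coproduct $\Delta$ and counit $\eta$, Sweedler notation is used: $\Delta(a)=\sum a'\otimes a''$, $\Delta^2(a)=\sum a'\otimes a''\otimes a'''$. An $A$-valued bicharacter on $M$ is a linear map $r:M\otimes M\to A$ such that for all $a,b,c\in M$: $r(1\otimes a)=\eta(a)=r(a\otimes 1)$, $r(ab\otimes c)=\sum r(a\otimes c')r(b\otimes c'')$, and $r(a\otimes bc)=\sum r(a'\otimes b)r(a''\otimes c)$. The convolution of bicharacters is $(r_1\circ r_2)(a\otimes b)=\sum r_1(a'\otimes b')r_2(a''\otimes b'')$. Write $M_A=M\otimes_{\mathbb{C}}A$. The map $\mathrm{EQ}_r:M\to M_A$ is $\mathrm{EQ}_r(m)=\sum r(m'\otimes m'')m'''$, extended $A$-linearly to $M_A\to M_A$; the composition $\mathrm{EQ}_{r_1}\circ\mathrm{EQ}_{r_2}$ uses this $A$-linear extension of $\mathrm{EQ}_{r_1}$. *)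

(* The complex numbers are R[i] (real_closed's `complex`)
   over an arbitrary realType R (a model of the reals). *)
From HB Require Import structures.
From mathcomp Require Import all_boot all_order all_algebra.
From mathcomp Require Import reals complex.
Set Implicit Arguments. Unset Strict Implicit. Unset Printing Implicit Defensive.
Import Order.TTheory GRing.Theory Num.Theory.
Local Open Scope ring_scope.

Section Hopf.
Variable C : fieldType.

(* Elements of a tensor product U (x) W (over C) are represented as finite
   sums of simple tensors, i.e. sequences of pairs.  Two such sums are equal
   in U (x) W iff every C-bilinear map out of U * W agrees on them
   (universal property of the tensor product). *)
Definition bilinear_map (U W V : lmodType C) (f : U -> W -> V) : Prop :=
  (forall (k : C) x y b, f (k *: x + y) b = k *: f x b + f y b) /\
  (forall (k : C) a x y, f a (k *: x + y) = k *: f a x + f a y).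

Definition trilinear_map (U W X V : lmodType C) (f : U -> W -> X -> V) : Prop :=
  (forall (k : C) x y b c, f (k *: x + y) b c = k *: f x b c + f y b c) /\
  (forall (k : C) a x y c, f a (k *: x + y) c = k *: f a x c + f a y c) /\
  (forall (k : C) a b x y, f a b (k *: x + y) = k *: f a b x + f a b y).

Definition tens_eval (U W V : lmodType C) (f : U -> W -> V) (t : seq (U * W)) : V :=
  \sum_(p <- t) f p.1 p.2.

Definition tens_eq (U W : lmodType C) (t1 t2 : seq (U * W)) : Prop :=
  forall (V : lmodType C) (f : U -> W -> V), bilinear_map f ->
    tens_eval f t1 = tens_eval f t2.

(* A commutative (M is a comAlgType) and cocommutative Hopf algebra over C.
   The coproduct Delta a = sum a' (x) a'' is given by a sequence of pairs. *)
Record cchopf (M : comAlgType C) := CCHopf {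
  Delta : M -> seq (M * M);
  counit : M -> C;
  antipode : M -> M;
  Delta_linear : forall (k : C) a b (V : lmodType C) (f : M -> M -> V),
    bilinear_map f ->
    tens_eval f (Delta (k *: a + b)) = k *: tens_eval f (Delta a) + tens_eval f (Delta b);
  Delta1 : tens_eq (Delta 1) [:: (1, 1)];
  DeltaM : forall a b, tens_eq (Delta (a * b))
     [seq (p.1 * q.1, p.2 * q.2) | p <- Delta a, q <- Delta b];
  Delta_coassoc : forall a (V : lmodType C) (g : M -> M -> M -> V),
    trilinear_map g ->
    \sum_(p <- Delta a) \sum_(q <- Delta p.1) g q.1 q.2 p.2 =
    \sum_(p <- Delta a) \sum_(q <- Delta p.2) g p.1 q.1 q.2;
  counit_linear : forall (k : C) a b, counit (k *: a + b) = k * counit a + counit b;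
  counit1 : counit 1 = 1;
  counitM : forall a b, counit (a * b) = counit a * counit b;
  counit_left : forall a, \sum_(p <- Delta a) counit p.1 *: p.2 = a;
  counit_right : forall a, \sum_(p <- Delta a) counit p.2 *: p.1 = a;
  antipode_linear : forall (k : C) a b, antipode (k *: a + b) = k *: antipode a + antipode b;
  antipode_left : forall a, \sum_(p <- Delta a) antipode p.1 * p.2 = counit a *: 1;
  antipode_right : forall a, \sum_(p <- Delta a) p.1 * antipode p.2 = counit a *: 1;
  Delta_cocomm : forall a, tens_eq (Delta a) [seq (p.2, p.1) | p <- Delta a]
}.

Variables (M : comAlgType C) (H : cchopf M) (A : comAlgType C).

(* An A-valued bicharacter: a C-linear map M (x) M -> A, i.e. a bilinear map. *)
Definition bicharacter (r : M -> M -> A) : Prop :=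
  bilinear_map r /\
  (forall a, r 1 a = (counit H a)%:A) /\
  (forall a, r a 1 = (counit H a)%:A) /\
  (forall a b c, r (a * b) c = \sum_(q <- Delta H c) r a q.1 * r b q.2) /\
  (forall a b c, r a (b * c) = \sum_(p <- Delta H a) r p.1 b * r p.2 c).

Definition conv (r1 r2 : M -> M -> A) : M -> M -> A := fun a b =>
  \sum_(p <- Delta H a) \sum_(q <- Delta H b) r1 p.1 q.1 * r2 p.2 q.2.

(* EQ_r : M -> M_A = M (x)_C A, EQ_r(m) = sum r(m' (x) m'') m''',
   with Delta^2 = (Delta (x) id) o Delta. *)
Definition EQ (r : M -> M -> A) (m : M) : seq (M * A) :=
  [seq (p.2, r q.1 q.2) | p <- Delta H m, q <- Delta H p.1].

(* A-linear extension of EQ_r to M_A: EQ_r(m (x) a) = EQ_r(m) * a. *)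
Definition EQA (r : M -> M -> A) (t : seq (M * A)) : seq (M * A) :=
  [seq (y.1, y.2 * x.2) | x <- t, y <- EQ r x.1].

End Hopf.

From HB Require Import structures.
From mathcomp Require Import all_boot all_order all_algebra.
From mathcomp Require Import reals complex.
Import GRing.Theory.
Local Open Scope ring_scope.
Local Open Scope complex_scope.
Set Implicit Arguments. Unset Strict Implicit. Unset Printing Implicit Defensive.

(* Tested against a bilinear map f, both sides are five-fold Sweedler sums
   over m: EQ_(r1 o r2) gives f(m5, r1(m1, m3) r2(m2, m4)), whereas
   EQ_r1 o EQ_r2 gives f(m5, r1(m3, m4) r2(m1, m2)).  Coassociativity brings
   both to the same bracketing, and cocommutativity lets the four inner legs
   of the iterated coproduct be permuted freely, which identifies the sums. *)

Section MultilinearMaps.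
Variable C : fieldType.

Lemma linear_fun_sum (U V : lmodType C) (f : U -> V) I (s : seq I) (F : I -> U) :
  linear f -> f (\sum_(i <- s) F i) = \sum_(i <- s) f (F i).
Proof.
move=> f_lin; have [_ fD] := GRing.semilinear_linear f_lin.
have f0 : f 0 = 0 by rewrite -(subrr 0) (GRing.zmod_morphism_linear f_lin) subrr.
exact: big_morph.
Qed.

Lemma linear_sum_fun (U V : lmodType C) I (s : seq I) (F : I -> U -> V) :
  (forall i, linear (F i)) -> linear (fun x => \sum_(i <- s) F i x).
Proof.
move=> F_lin k x y; rewrite scaler_sumr -big_split.
by apply: eq_bigr => i _; apply: F_lin.
Qed.

Lemma bilinear_mapP (U W V : lmodType C) (g : U -> W -> V) :
  (forall b, linear (g^~ b)) -> (forall a, linear (g a)) -> bilinear_map g.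
Proof. by move=> g_lin1 g_lin2; split=> *; [apply: g_lin1 | apply: g_lin2]. Qed.

Lemma trilinear_mapP (U W X V : lmodType C) (g : U -> W -> X -> V) :
  (forall b c, linear (fun a => g a b c)) -> (forall a c, linear (fun b => g a b c)) ->
  (forall a b, linear (g a b)) -> trilinear_map g.
Proof.
by move=> g_lin1 g_lin2 g_lin3; split; [|split] => *;
  [apply: g_lin1 | apply: g_lin2 | apply: g_lin3].
Qed.

Definition multilinear4 (U V : lmodType C) (K : U -> U -> U -> U -> V) :=
  [/\ forall b c d, linear (fun a => K a b c d), forall a c d, linear (fun b => K a b c d),
      forall a b d, linear (fun c => K a b c d) & forall a b c, linear (K a b c)].

End MultilinearMaps.

Section Sweedler.
Variables (C : fieldType) (M : comAlgType C) (H : cchopf M).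

Definition sweedler (V : lmodType C) (a : M) (g : M -> M -> V) : V :=
  \sum_(p <- Delta H a) g p.1 p.2.

Definition sweedler3 (V : lmodType C) (a : M) (g : M -> M -> M -> V) : V :=
  sweedler a (fun x y => sweedler y (g x)).

Definition sweedler4 (V : lmodType C) (a : M) (K : M -> M -> M -> M -> V) : V :=
  sweedler a (fun x y => sweedler3 y (K x)).

(* The sum over [(Delta (x) Delta) (Delta a)]. *)
Definition sweedler22 (V : lmodType C) (a : M) (K : M -> M -> M -> M -> V) : V :=
  sweedler a (fun x y => sweedler x (fun u1 u2 => sweedler y (K u1 u2))).

Variable V : lmodType C.

Lemma sweedler_linear (g : M -> M -> V) :
  (forall b, linear (g^~ b)) -> (forall a, linear (g a)) -> linear (fun a => sweedler a g).
Proof. by move=> g_lin1 g_lin2 k a b; apply: Delta_linear; apply: bilinear_mapP. Qed.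

Lemma sweedler_linear_param (X : lmodType C) a (g : X -> M -> M -> V) :
  (forall x y, linear (fun t => g t x y)) -> linear (fun t => sweedler a (g t)).
Proof. by move=> g_lin; apply: linear_sum_fun => p; apply: g_lin. Qed.

Lemma sweedler_cocomm a (g : M -> M -> V) :
  (forall b, linear (g^~ b)) -> (forall a, linear (g a)) ->
  sweedler a g = sweedler a (fun x y => g y x).
Proof.
move=> g_lin1 g_lin2; have := Delta_cocomm H a (bilinear_mapP g_lin1 g_lin2).
by rewrite /tens_eval big_map.
Qed.

Lemma sweedler_coassoc a (g : M -> M -> M -> V) :
  (forall b c, linear (fun a => g a b c)) -> (forall a c, linear (fun b => g a b c)) ->
  (forall a b, linear (g a b)) ->
  sweedler a (fun x y => sweedler x (fun u v => g u v y)) = sweedler3 a g.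
Proof. by move=> g_lin1 g_lin2 g_lin3; apply/Delta_coassoc/trilinear_mapP. Qed.

Lemma sweedler3_swap12 a (g : M -> M -> M -> V) :
  (forall b c, linear (fun a => g a b c)) -> (forall a c, linear (fun b => g a b c)) ->
  (forall a b, linear (g a b)) ->
  sweedler3 a g = sweedler3 a (fun x y z => g y x z).
Proof.
move=> g_lin1 g_lin2 g_lin3; rewrite -!sweedler_coassoc //.
by apply: eq_bigr => p _; apply: (sweedler_cocomm _ (g := fun x y => g x y p.2)).
Qed.

Section FourFold.
Variables (K : M -> M -> M -> M -> V) (a : M).
Hypothesis K_lin : multilinear4 K.

Let K_last x y z := sweedler z (K x y).

Let K_last_linear1 b c : linear (fun x => K_last x b c).
Proof. by case: K_lin => K_lin1 *; apply: sweedler_linear_param. Qed.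

Let K_last_linear2 x c : linear (fun y => K_last x y c).
Proof. by case: K_lin => _ K_lin2 *; apply: sweedler_linear_param. Qed.

Let K_last_linear3 x y : linear (K_last x y).
Proof. by case: K_lin => _ _ K_lin3 K_lin4; apply: sweedler_linear. Qed.

Lemma sweedler22_4 : sweedler22 a K = sweedler4 a K.
Proof. exact: sweedler_coassoc K_last_linear1 K_last_linear2 K_last_linear3. Qed.

Lemma sweedler4_swap12 : sweedler4 a K = sweedler4 a (fun x y z w => K y x z w).
Proof. exact: sweedler3_swap12 K_last_linear1 K_last_linear2 K_last_linear3. Qed.

Lemma sweedler4_swap23 : sweedler4 a K = sweedler4 a (fun x y z w => K x z y w).
Proof.
have [_ K_lin2 K_lin3 K_lin4] := K_lin.
by apply: eq_bigr => p _; apply: sweedler3_swap12.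
Qed.

Lemma sweedler4_swap34 : sweedler4 a K = sweedler4 a (fun x y z w => K x y w z).
Proof.
have [_ _ K_lin3 K_lin4] := K_lin.
apply: eq_bigr => p _; apply: eq_bigr => q _.
exact: (sweedler_cocomm _ (g := fun x y => K p.1 q.1 x y)).
Qed.

End FourFold.

Lemma sweedler22_perm a (K : M -> M -> M -> M -> V) : multilinear4 K ->
  sweedler22 a K = sweedler22 a (fun x y z w => K z x w y).
Proof.
move=> K_lin; have [K_lin1 K_lin2 K_lin3 K_lin4] := K_lin.
have K_zxwy : multilinear4 (fun x y z w => K z x w y).
  by split=> *; [apply: K_lin2 | apply: K_lin4 | apply: K_lin1 | apply: K_lin3].
have K_yxwz : multilinear4 (fun x y z w => K y x w z).
  by split=> *; [apply: K_lin2 | apply: K_lin1 | apply: K_lin4 | apply: K_lin3].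
have K_xywz : multilinear4 (fun x y z w => K x y w z).
  by split=> *; [apply: K_lin1 | apply: K_lin2 | apply: K_lin4 | apply: K_lin3].
rewrite (sweedler22_4 _ K_lin) (sweedler22_4 _ K_zxwy) (sweedler4_swap23 _ K_zxwy).
by rewrite (sweedler4_swap12 _ K_yxwz) (sweedler4_swap34 _ K_xywz).
Qed.

End Sweedler.

Section TensEvalEQ.
Variables (C : fieldType) (M : comAlgType C) (H : cchopf M).
Variables (A : comAlgType C) (V : lmodType C) (f : M -> A -> V) (r : M -> M -> A).

Lemma tens_eval_EQ m :
  tens_eval f (EQ H r m) = sweedler H m (fun x y => sweedler H x (fun u v => f y (r u v))).
Proof. by rewrite /tens_eval big_allpairs_dep. Qed.

Lemma tens_eval_EQA t : tens_eval f (EQA H r t) =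
  \sum_(x <- t) sweedler H x.1 (fun y z => sweedler H y (fun u v => f z (r u v * x.2))).
Proof.
rewrite /tens_eval big_allpairs_dep.
by apply: eq_bigr => x _; rewrite big_allpairs_dep.
Qed.

End TensEvalEQ.

Section ConvolutionEQ.
Variables (C : fieldType) (M : comAlgType C) (H : cchopf M).
Variables (A : comAlgType C) (V : lmodType C) (f : M -> A -> V) (r1 r2 r : M -> M -> A).
Hypothesis f_bilin : bilinear_map f.
Hypotheses (r1_bilin : bilinear_map r1) (r2_bilin : bilinear_map r2).
Hypothesis r_conv : r =2 conv H r1 r2.

Let prod_term z u1 u2 v1 v2 := f z (r1 u1 v1 * r2 u2 v2).

Let f_linear z : linear (f z).
Proof. by move=> k x y; case: f_bilin => _; apply. Qed.

Let prod_term_linear u1 u2 v1 v2 : linear (fun z => prod_term z u1 u2 v1 v2).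
Proof. by move=> k x y; case: f_bilin => + _; apply. Qed.

Let prod_term_multilinear z : multilinear4 (prod_term z).
Proof.
have [[r1_lin1 r1_lin2] [r2_lin1 r2_lin2]] := (r1_bilin, r2_bilin).
split=> * k x y; rewrite /prod_term -f_linear.
- by rewrite r1_lin1 mulrDl -scalerAl.
- by rewrite r2_lin1 mulrDr -scalerAr.
- by rewrite r1_lin2 mulrDl -scalerAl.
- by rewrite r2_lin2 mulrDr -scalerAr.
Qed.

Lemma tens_eval_EQ_conv m :
  tens_eval f (EQ H r m) = sweedler H m (fun x y => sweedler22 H x (prod_term y)).
Proof.
rewrite tens_eval_EQ; apply: eq_bigr => p _; apply: eq_bigr => q _.
rewrite r_conv /conv linear_fun_sum //; apply: eq_bigr => u _; exact: linear_fun_sum.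
Qed.

Lemma tens_eval_EQA_EQ m : tens_eval f (EQA H r1 (EQ H r2 m)) =
  sweedler H m (fun x y => sweedler22 H x (fun u1 u2 v1 v2 => prod_term y v1 u1 v2 u2)).
Proof.
pose g x s1 s2 := sweedler H x (fun q1 q2 =>
  sweedler H s1 (fun t1 t2 => prod_term s2 t1 q1 t2 q2)).
rewrite tens_eval_EQA /EQ big_allpairs_dep.
transitivity (sweedler3 H m g).
  by apply: eq_bigr => p _; rewrite /g /sweedler exchange_big.
symmetry; apply: (sweedler_coassoc H _ (g := g)).
- move=> s1 s2; have [_ K_lin2 _ K_lin4] := prod_term_multilinear s2.
  by apply: sweedler_linear => *; apply: sweedler_linear_param => *;
    [apply: K_lin2 | apply: K_lin4].
- move=> x s2; have [K_lin1 _ K_lin3 _] := prod_term_multilinear s2.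
  by apply: sweedler_linear_param => *; apply: sweedler_linear => *;
    [apply: K_lin1 | apply: K_lin3].
- by move=> x s1; apply: sweedler_linear_param => *; apply: sweedler_linear_param.
Qed.

Lemma tens_eval_EQ_conv_EQA m : tens_eval f (EQ H r m) = tens_eval f (EQA H r1 (EQ H r2 m)).
Proof.
rewrite tens_eval_EQ_conv tens_eval_EQA_EQ.
by apply: eq_bigr => p _; apply: sweedler22_perm.
Qed.

End ConvolutionEQ.

Theorem lemma2p7 (R : realType) (M : comAlgType R[i]) (H : cchopf M)
  (A : comAlgType R[i]) (r1 r2 r : M -> M -> A) :
  bicharacter H r1 -> bicharacter H r2 ->
  (forall a b, r a b = conv H r1 r2 a b) ->
  forall m : M, tens_eq (EQ H r m) (EQA H r1 (EQ H r2 m)).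
Proof.
move=> [r1_bilin _] [r2_bilin _] r_conv m V f f_bilin.
exact: tens_eval_EQ_conv_EQA.
Qed.
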